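(* Let $n$ be an odd integer, $q=2^n$, and let $i$ be a positive integer with $\gcd(i,n)=1$. Let $d$ be an integer with $d\equiv\frac{2^i+1}{3}\pmod{2^n-1}$, i.e. $3d\equiv 2^i+1\pmod{2^n-1}$. Then for every $u\in\mathrm{GF}(q)\setminus\mathrm{GF}(2)$ the cubic equation \[\big(u^dx+(1+u)^d\big)^3+x^3+1=0\] has a unique solution $x\in\mathrm{GF}(2^n)$.
   Context: Since $n$ is odd, $\gcd(3,2^n-1)=1$, so $\frac{2^i+1}{3}$ denotes $(2^i+1)$ times the inverse of $3$ modulo $2^n-1$. *)

(* GF(2^n) is modelled as an arbitrary finite field F with #|F| = 2^n. *)
From mathcomp Require Import all_boot all_order all_algebra all_field.

From mathcomp Require Import all_boot all_order all_algebra all_field.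
From mathcomp Require Import ring.
Set Implicit Arguments.
Unset Strict Implicit.
Unset Printing Implicit Defensive.

Import GRing.Theory.
Local Open Scope ring_scope.

(* Put a = u^d, b = (1+u)^d and K = u^(2^i), so that a^3 = uK and
   b^3 = (1+u)(1+K).  In characteristic 2 the substitution
   z = (a^3+1) x + a^2 b turns the equation into the depressed cubic
   z^3 + c z + e = 0 with c = a b^2 and e = (u+K)(uK+1).  Here e != 0:
   u = K or uK = 1 would make u a fixed point of x |-> x^(2^i) or of
   x |-> x^(2^(2i)), and as i and 2i are coprime to n, u would lie in GF(2).
   Since n is odd, 3 is coprime to 2^n - 1, so cubing is a bijection and 1 is
   the only cube root of unity.  A depressed cubic then has the root w + c/w
   whenever its resolvent W^2 + e W + c^3 has a nonzero root W = w^3, and no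
   other root, since a second root z would make (z + c/w)/(w + c/w) a
   primitive cube root of unity.  Here the resolvent has the root
   W = u (1+K)^2. *)

Lemma iter_fixed_gcdn (T : Type) (f : T -> T) (x : T) (m n : nat) :
  iter m f x = x -> iter n f x = x -> iter (gcdn m n) f x = x.
Proof.
move=> fmx fnx; have [->|m_gt0] := posnP m; first by rewrite gcd0n.
have iter_mul k p : iter p f x = x -> iter (k * p) f x = x.
  by move=> fpx; elim: k => // k IHk; rewrite mulSn iterD IHk.
have [a _ /dvdnP[b def_b]] := Bezoutl n m_gt0.
by rewrite -[RHS](iter_mul b m fmx) -def_b iterD iter_mul.
Qed.

Lemma coprime3_pow2_pred n : odd n -> coprime 3 (2 ^ n).-1.
Proof.
move=> n_odd; rewrite prime_coprime // -subn1 -(eqn_mod_dvd 3) ?expn_gt0 //.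
rewrite -[n](odd_double_half n) n_odd -mul2n expnS expnM.
by rewrite -modnMmr -modnXm (_ : 2 ^ 2 %% 3 = 1)%N // exp1n.
Qed.

Section FiniteField.
Variable F : finFieldType.

Lemma expf_card_pred (x : F) : x != 0 -> x ^+ #|F|.-1 = 1.
Proof.
move=> x0; apply: (mulfI x0).
by rewrite -exprS (ltn_predK (finNzRing_gt1 F)) expf_card mulr1.
Qed.

Lemma expf_inj_coprime k : (0 < k)%N -> coprime k #|F|.-1 ->
  injective (fun x : F => x ^+ k).
Proof.
move=> k_gt0 k_coprime x y /= eq_xy.
have [y0|y0] := eqVneq y 0.
  by move/eqP: eq_xy; rewrite y0 expr0n gtn_eqF // expf_eq0 k_gt0 => /eqP.
have x0 : x != 0.
  by apply: contraNneq (expf_neq0 k y0) => x0; rewrite -eq_xy x0 expr0n gtn_eqF.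
apply: divr1_eq.
have : iter (gcdn k #|F|.-1) ( *%R (x / y)) 1 = 1.
  apply: iter_fixed_gcdn; rewrite iter_mulr_1.
    by rewrite expr_div_n eq_xy divff // expf_neq0.
  by rewrite expf_card_pred // mulf_neq0 ?invr_eq0.
by rewrite (eqP k_coprime) iter_mulr_1 expr1.
Qed.

Lemma expf_pow_fixed_coprime p n j (x : F) : #|F| = (p ^ n)%N ->
  coprime j n -> x ^+ (p ^ j) = x -> x ^+ p = x.
Proof.
move=> cardF j_coprime fixed_j.
have iter_pow k : iter k (fun y => y ^+ p) x = x ^+ (p ^ k).
  by elim: k => [|k IHk]; rewrite ?expr1 //= IHk expnSr exprM.
have : iter (gcdn j n) (fun y => y ^+ p) x = x.
  by apply: iter_fixed_gcdn; rewrite iter_pow // -cardF expf_card.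
by rewrite (eqP j_coprime).
Qed.

Lemma expfz_mod (x : F) (z1 z2 : int) : x != 0 ->
  (z1 = z2 %[mod #|F|.-1])%Z -> x ^ z1 = x ^ z2.
Proof.
move=> x0 eq_z; have reduce z : x ^ z = x ^ (z %% #|F|.-1)%Z.
  rewrite {1}(divz_eq z #|F|.-1) mulrC expfzDr ?expfz_neq0 // -exprz_exp.
  by rewrite -[x ^ _.-1]exprnP expf_card_pred // exp1rz mul1r.
by rewrite reduce eq_z -reduce.
Qed.

End FiniteField.

Lemma cubic_depressed_form (R : comPzRingType) (a b x : R) :
  let s := a ^+ 3 + 1 in let z := s * x + a ^+ 2 * b in
  s ^+ 2 * ((a * x + b) ^+ 3 + x ^+ 3 + 1) =
  z ^+ 3 + 3%:R * (a * b ^+ 2) * z + s ^+ 2 + (1 - a ^+ 3) * b ^+ 3.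
Proof. by move=> s z; rewrite /z /s; ring. Qed.

Section CharTwo.
Variable F : fieldType.
Hypothesis pcharF2 : 2 \in [pchar F].

Let natr3 : 3%:R = 1 :> F.
Proof. by rewrite -[3%N]/(1 + 2)%N natrD (pcharf0 pcharF2) addr0. Qed.

Lemma cubic_exists_unique_of_depressed (a b : F) : a ^+ 3 + 1 != 0 ->
  (exists! z,
     z ^+ 3 + a * b ^+ 2 * z + (a ^+ 3 + 1) * (a ^+ 3 + b ^+ 3 + 1) = 0) ->
  exists! x, (a * x + b) ^+ 3 + x ^+ 3 + 1 = 0.
Proof.
move=> s0 [z [root_z uniq_z]].
have rootE x : (a * x + b) ^+ 3 + x ^+ 3 + 1 = 0 <->
    let z := (a ^+ 3 + 1) * x + a ^+ 2 * b in
    z ^+ 3 + a * b ^+ 2 * z + (a ^+ 3 + 1) * (a ^+ 3 + b ^+ 3 + 1) = 0.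
  have -> : (a ^+ 3 + 1) * (a ^+ 3 + b ^+ 3 + 1) =
      (a ^+ 3 + 1) ^+ 2 + (1 - a ^+ 3) * b ^+ 3 by rewrite oppr_pchar2 //; ring.
  have -> : a * b ^+ 2 = 3%:R * (a * b ^+ 2) by rewrite natr3 mul1r.
  rewrite /= addrA -cubic_depressed_form.
  split=> [->|/eqP]; first by rewrite mulr0.
  by rewrite mulf_eq0 expf_eq0 (negbTE s0) /= => /eqP.
exists ((z - a ^+ 2 * b) / (a ^+ 3 + 1)); split.
  by apply/rootE; rewrite /= mulrC divfK // subrK.
by move=> x /rootE /uniq_z ->; rewrite addrK mulrC mulKf.
Qed.

Lemma cardano_pchar2 (w v : F) :
  (w + v) ^+ 3 + w * v * (w + v) = w ^+ 3 + v ^+ 3.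
Proof.
have -> : (w + v) ^+ 3 = w ^+ 3 + v ^+ 3 + 3%:R * (w * v * (w + v)) by ring.
by rewrite natr3 mul1r -addrA addrr_pchar2 // addr0.
Qed.

Lemma cube1_trinomial_neq0 (t : F) :
  (forall s : F, s ^+ 3 = 1 -> s = 1) -> t ^+ 2 + t + 1 != 0.
Proof.
move=> cube1; apply/eqP => t_root.
have t1 : t = 1.
  apply/cube1/eqP; rewrite -subr_eq0.
  have -> : t ^+ 3 - 1 = (t - 1) * (t ^+ 2 + t + 1) by ring.
  by rewrite t_root mulr0.
move: t_root; rewrite t1 expr1n addrr_pchar2 // add0r => /eqP.
by rewrite oner_eq0.
Qed.

Lemma depressed_cubic_exists_unique (c e w : F) :
  (forall s : F, s ^+ 3 = 1 -> s = 1) -> e != 0 -> w != 0 ->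
  (w ^+ 3) ^+ 2 + e * w ^+ 3 + c ^+ 3 = 0 ->
  exists! z, z ^+ 3 + c * z + e = 0.
Proof.
move=> cube1 e0 w0 resolvent; pose v := c / w.
have wv : w * v = c by rewrite mulrC divfK.
clearbody v; subst c.
have e_def : w ^+ 3 + v ^+ 3 = e.
  have : w ^+ 3 * (w ^+ 3 + v ^+ 3 + e) = 0 by rewrite -[RHS]resolvent; ring.
  move/eqP; rewrite mulf_eq0 expf_eq0 (negbTE w0) /= addr_eq0 oppr_pchar2 //.
  by move/eqP.
have root_wv : (w + v) ^+ 3 + w * v * (w + v) + e = 0.
  by rewrite -e_def cardano_pchar2 addrr_pchar2.
exists (w + v); split=> // z root_z.
apply/eqP; apply: contraT => z_neq.
have wv0 : w + v != 0.
  apply: contraNneq e0 => /eqP; rewrite addr_eq0 oppr_pchar2 // => /eqP w_v.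
  by rewrite -e_def w_v addrr_pchar2.
have quad : z ^+ 2 + z * (w + v) + (w + v) ^+ 2 + w * v = 0.
  have : (z ^+ 3 + w * v * z + e) - ((w + v) ^+ 3 + w * v * (w + v) + e) =
      (z - (w + v)) * (z ^+ 2 + z * (w + v) + (w + v) ^+ 2 + w * v) by ring.
  rewrite root_z root_wv subrr => /esym/eqP.
  by rewrite mulf_eq0 subr_eq0 eq_sym (negbTE z_neq) /= => /eqP.
pose t := (z + v) / (w + v).
have t_root : t ^+ 2 + t + 1 = 0.
  have -> : t ^+ 2 + t + 1 =
      ((z ^+ 2 + z * (w + v) + (w + v) ^+ 2 + w * v) + (v * (z + v)) *+ 2)
      / (w + v) ^+ 2 by rewrite /t; field.
  by rewrite quad mulrn_pchar // addr0 mul0r.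
by move: (cube1_trinomial_neq0 t cube1); rewrite t_root eqxx.
Qed.

Lemma resolvent_root_pchar2 (u K : F) :
  let W := u * (1 + K) ^+ 2 in
  W ^+ 2 + (u * K + 1) * (u + K) * W + u * K * ((1 + u) * (1 + K)) ^+ 2 = 0.
Proof.
move=> W.
have -> : W ^+ 2 + (u * K + 1) * (u + K) * W + u * K * ((1 + u) * (1 + K)) ^+ 2
    = (W * ((u * K + 1) * (u + K) + (u * K) *+ 2)) *+ 2 by rewrite /W; ring.
by rewrite mulrn_pchar.
Qed.

End CharTwo.

Lemma depressed_cubic_exists_unique_finite (F : finFieldType) (c e W : F) :
  2 \in [pchar F] -> coprime 3 #|F|.-1 -> c != 0 -> e != 0 ->
  W ^+ 2 + e * W + c ^+ 3 = 0 -> exists! z, z ^+ 3 + c * z + e = 0.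
Proof.
move=> pcharF2 cube3 c0 e0 resolvent.
have cube_inj := expf_inj_coprime (ltn0Sn 2) cube3.
have [cbrt _ cbrtK] := injF_bij cube_inj.
have W0 : W != 0.
  apply: contraNneq c0 => W0; move/eqP: resolvent.
  by rewrite W0 expr0n /= mulr0 !add0r expf_eq0 => /andP[].
apply: (depressed_cubic_exists_unique pcharF2 (w := cbrt W)) => //.
- by move=> s s3; apply: cube_inj; rewrite /= s3 expr1n.
- by apply: contraNneq W0 => w0; rewrite -[W]cbrtK /= w0 expr0n.
- by rewrite [cbrt W ^+ 3]cbrtK.
Qed.

Lemma cubic_exists_unique_finite (F : finFieldType) (u K a b : F) :
  2 \in [pchar F] -> coprime 3 #|F|.-1 -> a != 0 -> b != 0 ->
  a ^+ 3 = u * K -> b ^+ 3 = (1 + u) * (1 + K) ->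
  u + K != 0 -> u * K + 1 != 0 ->
  exists! x, (a * x + b) ^+ 3 + x ^+ 3 + 1 = 0.
Proof.
move=> pcharF2 cube3 a0 b0 a3 b3 uK0 uK1.
apply: (cubic_exists_unique_of_depressed pcharF2); first by rewrite a3.
rewrite a3 b3 (_ : u * K + _ + 1 = u + K + (u * K + 1) *+ 2); last by ring.
rewrite mulrn_pchar // addr0.
apply: (depressed_cubic_exists_unique_finite pcharF2 (W := u * (1 + K) ^+ 2)).
- exact: cube3.
- by rewrite mulf_neq0 ?expf_neq0.
- by rewrite mulf_neq0.
by rewrite [_ ^+ 3]exprMn a3 -exprM mulnC exprM b3 resolvent_root_pchar2.
Qed.

Unset Implicit Arguments.

Theorem lemma15 (F : finFieldType) (n i : nat) (d : int) :
  odd n -> #|F| = (2 ^ n)%N -> (0 < i)%N -> coprime i n ->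
  (3 * d = (2 ^ i + 1)%N %[mod (2 ^ n - 1)%N])%Z ->
  forall u : F, u != 0 -> u != 1 ->
  exists! x : F, (u ^ d * x + (1 + u) ^ d) ^+ 3 + x ^+ 3 + 1 = 0.
Proof.
move=> n_odd cardF _ i_coprime d_mod u u0 u1.
have pcharF2 : 2 \in [pchar F] by apply: (card_finPcharP cardF).
have u_notin_GF2 j : coprime j n -> u ^+ (2 ^ j) != u.
  move=> j_coprime; apply: contra_neq u1.
  move/(expf_pow_fixed_coprime cardF j_coprime).
  by rewrite expr2 -[X in _ = X -> _]mulr1 => /(mulfI u0).
set K := u ^+ (2 ^ i).
have pow_d (x : F) : x != 0 -> (x ^ d) ^+ 3 = x * x ^+ (2 ^ i).
  move=> x0; rewrite -exprS -(addn1 (2 ^ i)) !exprnP exprz_exp.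
  by apply: (expfz_mod x0); rewrite mulrC cardF -subn1.
have u1' : 1 + u != 0 by rewrite addrC addr_eq0 oppr_pchar2.
apply: (cubic_exists_unique_finite (u := u) (K := K) pcharF2).
- by rewrite cardF coprime3_pow2_pred.
- by rewrite expfz_neq0.
- by rewrite expfz_neq0.
- by rewrite pow_d.
- rewrite pow_d // exprDn_pchar ?expr1n //.
  by rewrite pnatX (pnatE _ (isT : prime 2)) pcharF2.
- by rewrite addr_eq0 oppr_pchar2 // eq_sym u_notin_GF2.
rewrite addr_eq0 oppr_pchar2 //; apply/eqP => uK1.
have coprime_ii : coprime (i + i) n.
  by rewrite addnn -mul2n coprimeMl coprime2n n_odd.
move: (u_notin_GF2 _ coprime_ii); rewrite expnD exprM -/K => /eqP; apply.
apply: (mulfI (expf_neq0 _ u0 : K != 0)).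
by rewrite [RHS]mulrC uK1 {1}/K -exprMn uK1 expr1n.
Qed.
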